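(* For $k\in\{2,3\}$, the graph $BT(k)$ lies in $\mathcal{G}(2k+1,3)$ and \[ \rho_3(BT(k))=\frac{(k+1)(k^2+1)}{3k+2}>\rho_3\big(T(3k+1,3)\big); \] in particular $f_3(2k+1,3)>\rho_3(T(3k+1,3))$.
   Context: $\mathcal{G}(\Delta,\omega)$ denotes the class of finite simple graphs $G$ with maximum degree $\Delta(G)\le\Delta$ and clique number $\omega(G)\le\omega$. $k_t(G)$ is the number of copies of $K_t$ in $G$ and $\rho_t(G)=k_t(G)/|V(G)|$. $f_t(\Delta,\omega)=\sup\{\rho_t(G): G\in\mathcal{G}(\Delta,\omega),\ |V(G)|\ge 1\}$. $T(n,r)$ denotes the $r$-partite Turán graph on $n$ vertices (complete $r$-partite, part sizes as equal as possible). For $k\ge2$, $\widetilde{BT}(k)$ is obtained from the complete bipartite graph $K_{k,k}$ by deleting one edge $xy$ and adding a new vertex adjacent exactly to $x$ and $y$; then $BT(k)=\widetilde{BT}(k)\vee I_{k+1}$ is the join of $\widetilde{BT}(k)$ with an independent set of $k+1$ new vertices (every vertex of $\widetilde{BT}(k)$ adjacent to every vertex of $I_{k+1}$). $BT(k)$ has $3k+2$ vertices. *)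

From mathcomp Require Import all_boot all_order all_algebra.
Set Implicit Arguments. Unset Strict Implicit. Unset Printing Implicit Defensive.
Import Order.TTheory GRing.Theory Num.Theory.

Section Graphs.
Variable T : finType.
Implicit Type e : rel T.

Definition simple_graph e : bool :=
  [forall x, ~~ e x x] && [forall x, forall y, e x y == e y x].

Definition nbhd e (x : T) : {set T} := [set y | e x y].
Definition maxdeg_le e (D : nat) : bool := [forall x, #|nbhd e x| <= D].

Definition is_clique e (S : {set T}) : bool :=
  [forall x in S, forall y in S, (x != y) ==> e x y].
Definition clique_num_le e (w : nat) : bool :=
  [forall S : {set T}, is_clique e S ==> (#|S| <= w)].

Definition in_G e (D w : nat) : bool :=
  [&& simple_graph e, maxdeg_le e D & clique_num_le e w].

Definition kt e (t : nat) : nat :=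
  #|[set S : {set T} | (#|S| == t) && is_clique e S]|.

Definition rho e (t : nat) : rat := (kt e t)%:R / (#|T|)%:R.
End Graphs.

(* Turan graph T(n,r): vertex i in part (i mod r); complete r-partite,
   part sizes as equal as possible. *)
Definition turan (n r : nat) : rel 'I_n :=
  fun i j => (i %% r)%N != (j %% r)%N.

(* BT(k) on vertices 0..3k+1:
   A = {0..k-1}, B = {k..2k-1} (the K_{k,k}), x = 0, y = k (deleted edge xy),
   z = 2k the new vertex adjacent to x and y, I = {2k+1..3k+1} the independent
   set of k+1 vertices joined to everything in {0..2k}. *)
Definition bt_half (k i j : nat) : bool :=
  [|| [&& i < k, k <= j, j < 2 * k & ~~ ((i == 0) && (j == k))],
      (j == 2 * k) && ((i == 0) || (i == k))
    | (i <= 2 * k) && (2 * k < j)].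

Definition BT (k : nat) : rel 'I_(3 * k + 2) :=
  fun i j => bt_half k i j || bt_half k j i.

Arguments BT k : clear implicits.
Arguments turan n r : clear implicits.

(* BT(k) has k^2 + 1 edges outside the independent set I_{k+1}, none of them in a
   triangle (the K_{k,k} minus xy is bipartite and z sees only the non-adjacent x
   and y), and every such edge spans a triangle with each of the k + 1 vertices of
   I_{k+1}: hence (k+1)(k^2+1) triangles on 3k+2 vertices.  The Turan graph
   T(3k+1,3) has parts of sizes k+1, k, k, hence (k+1)k^2 triangles, and comparing
   the two densities reduces to k^2 < 3k + 1, which holds exactly for k <= 3.  The
   degree, clique and triangle counts for k = 2, 3 are checked by computation. *)
From mathcomp Require Import all_boot all_order all_algebra.
From mathcomp Require Import zify.
Set Implicit Arguments. Unset Strict Implicit. Unset Printing Implicit Defensive.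
Import Order.TTheory GRing.Theory Num.Theory.

Lemma card_set_ord n (P : pred nat) :
  #|[set i : 'I_n | P i]| = \sum_(0 <= i < n) P i.
Proof.
rewrite -sum1_card big_mkcond big_mkord /=.
by apply: eq_bigr => i _; rewrite inE; case: (P i).
Qed.

Lemma card_set_ord3 n (P : nat -> nat -> nat -> bool) :
  #|[set t : 'I_n * 'I_n * 'I_n | P t.1.1 t.1.2 t.2]| =
  \sum_(0 <= a < n) \sum_(0 <= b < n) \sum_(0 <= c < n) P a b c.
Proof.
rewrite big_mkord.
under eq_bigr => a _ do rewrite big_mkord.
under eq_bigr => a _ do under eq_bigr => b _ do rewrite big_mkord.
rewrite pair_bigA pair_bigA -sum1_card big_mkcond /=.
by apply: eq_bigr => t _; rewrite inE; case: (P _ _ _).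
Qed.

Lemma all_iota_ord n (P : pred nat) : all P (iota 0 n) -> forall i : 'I_n, P i.
Proof. by move=> /allP allP i; apply: allP; rewrite mem_iota ltn_ord. Qed.

Lemma clique_card_gt3 {T : finType} {e : rel T} {S : {set T}} :
  is_clique e S -> 3 < #|S| ->
  exists a b c d, [&& e a b, e a c, e a d, e b c, e b d & e c d].
Proof.
move=> /forallP clS; rewrite cardE.
have := enum_uniq (pred_of_set S); have := mem_enum (pred_of_set S).
case: (enum S) => [|a [|b [|c [|d s]]]] //= memS uniqS _.
have edge x y : x \in [:: a, b, c, d & s] -> y \in [:: a, b, c, d & s] ->
    x != y -> e x y.
  rewrite !memS => Sx Sy xy.
  by move: (clS x); rewrite Sx => /forallP /(_ y); rewrite Sy xy.
move: uniqS; rewrite !inE !negb_or => /and5P [/and4P [ab ac ad _]].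
move=> /and3P [bc bd _] /andP [cd _] _ _.
by exists a, b, c, d; rewrite !edge ?inE ?eqxx ?orbT.
Qed.

Lemma card3_sorted n (S : {set 'I_n}) : #|S| = 3 ->
  exists a b c : 'I_n, [/\ a < b, b < c & S = [set a; b; c]].
Proof.
move=> cardS.
have := Order.enum_uniq (pred_of_set S); have := Order.mem_enum (pred_of_set S).
have := Order.cardE (pred_of_set S).
have : sorted <=%O (Order.enum (pred_of_set S)) by apply: sort_sorted; exact: le_total.
case: (Order.enum _) => [|a [|b [|c [|d s]]]] //=; rewrite ?cardS //.
rewrite andbT => /andP [ab bc] _ memS; rewrite !inE !negb_or andbT.
move=> /andP [/andP [/negPf nab _] /negPf nbc].
exists a, b, c; split.
- by rewrite ltn_neqAle val_eqE nab; exact: ab.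
- by rewrite ltn_neqAle val_eqE nbc; exact: bc.
- by apply/setP => v; rewrite -memS !inE orbA.
Qed.

Lemma sorted_triple_inj n (a b c a' b' c' : 'I_n) :
  a < b < c -> a' < b' < c' -> [set a; b; c] = [set a'; b'; c'] ->
  [/\ a = a', b = b' & c = c'].
Proof.
move=> /andP [ab bc] /andP [ab' bc'] eqS.
have mem3 (u x y z : 'I_n) : u \in [set x; y; z] ->
    [\/ u = x :> nat, u = y :> nat | u = z :> nat].
  by rewrite !inE => /orP [/orP [] | ] /eqP ->; [constructor 1|constructor 2|constructor 3].
have mem_abc u : (u \in [set a; b; c]) = (u \in [set a'; b'; c']) by rewrite eqS.
have /mem3 Ha : a \in [set a'; b'; c'] by rewrite -mem_abc !inE eqxx.
have /mem3 Hb : b \in [set a'; b'; c'] by rewrite -mem_abc !inE eqxx orbT.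
have /mem3 Hc : c \in [set a'; b'; c'] by rewrite -mem_abc !inE eqxx !orbT.
have /mem3 Ha' : a' \in [set a; b; c] by rewrite mem_abc !inE eqxx.
have /mem3 Hc' : c' \in [set a; b; c] by rewrite mem_abc !inE eqxx !orbT.
have ea : a = a' :> nat by case: Ha => ?; case: Ha' => ?; lia.
have ec : c = c' :> nat by case: Hc => ?; case: Hc' => ?; lia.
have eb : b = b' :> nat by case: Hb => ?; lia.
by split; apply: val_inj.
Qed.

Section GraphsOnOrdinals.

Variables (n : nat) (e : rel 'I_n) (f : nat -> nat -> bool).
Hypothesis eE : forall i j : 'I_n, e i j = f i j.
Hypothesis f_sym : forall a b, f a b = f b a.

Lemma is_clique3 (a b c : 'I_n) :
  f a b -> f a c -> f b c -> is_clique e [set a; b; c].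
Proof.
move=> fab fac fbc; apply/forallP => x; apply/implyP => Sx.
apply/forallP => y; apply/implyP => Sy; apply/implyP => xy.
move: Sx Sy xy; rewrite !inE eE.
by move=> /orP [/orP [] | ] /eqP -> /orP [/orP [] | ] /eqP -> //;
  rewrite ?eqxx // => _; rewrite // f_sym.
Qed.

Lemma kt3_ord : kt e 3 =
  \sum_(0 <= a < n) \sum_(0 <= b < n) \sum_(0 <= c < n)
    [&& a < b, b < c, f a b, f a c & f b c].
Proof.
rewrite -card_set_ord3 /kt.
set D := [set t : 'I_n * 'I_n * 'I_n | _].
rewrite -(card_in_imset (D := D) (f := fun t => [set t.1.1; t.1.2; t.2])); last first.
  move=> [[a b] c] [[a' b'] c']; rewrite !inE /=.
  move=> /and3P [ab bc _] /and3P [ab' bc' _] /sorted_triple_inj.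
  by rewrite ab bc ab' bc' => /(_ isT isT) [-> -> ->].
apply: eq_card => S; rewrite inE; apply/andP/imsetP.
  move=> [/eqP /card3_sorted [a [b [c [ab bc ->]]]] cl].
  have edge (x y : 'I_n) : x \in [set a; b; c] -> y \in [set a; b; c] ->
      x != y -> f x y.
    move=> Sx Sy xy; rewrite -eE.
    by move/forallP: cl => /(_ x); rewrite Sx => /forallP /(_ y); rewrite Sy xy.
  exists (a, b, c) => //; rewrite inE; apply/and5P; split=> //=;
    apply: edge; rewrite ?inE ?eqxx ?orbT //.
  - by rewrite -val_eqE neq_ltn ab.
  - by rewrite -val_eqE neq_ltn (ltn_trans ab bc).
  - by rewrite -val_eqE neq_ltn bc.
move=> [[[a b] c]]; rewrite inE /= => /and5P [ab bc fab fac fbc] ->.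
split; last exact: is_clique3.
have nab : a != b by rewrite -val_eqE neq_ltn ab.
have nac : a != c by rewrite -val_eqE neq_ltn (ltn_trans ab bc).
have nbc : b != c by rewrite -val_eqE neq_ltn bc.
by rewrite -setUA cardsU1 cards2 !inE negb_or nab nac nbc.
Qed.

Lemma in_G_ord (D : nat) :
  all (fun a => ~~ f a a) (iota 0 n) ->
  all (fun a => \sum_(0 <= b < n) f a b <= D) (iota 0 n) ->
  all (fun a => all (fun b => all (fun c => all (fun d =>
      ~~ [&& f a b, f a c, f a d, f b c, f b d & f c d])
    (iota 0 n)) (iota 0 n)) (iota 0 n)) (iota 0 n) ->
  in_G e D 3.
Proof.
move=> /all_iota_ord irr /all_iota_ord deg /all_iota_ord noK4.
apply/and3P; split.
- apply/andP; split; apply/forallP => x; first by rewrite eE irr.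
  by apply/forallP => y; rewrite !eE f_sym.
- apply/forallP => x; rewrite /nbhd.
  have -> : [set y | e x y] = [set y : 'I_n | f x y].
    by apply/setP => y; rewrite !inE eE.
  by rewrite card_set_ord deg.
- apply/forallP => S; apply/implyP => clS; rewrite leqNgt; apply/negP.
  move=> /(clique_card_gt3 clS) [a [b [c [d]]]]; rewrite !eE; apply/negP.
  have mem_iota_ord (i : 'I_n) : (i : nat) \in iota 0 n by rewrite mem_iota ltn_ord.
  by have /allP/(_ _ (mem_iota_ord b))/allP/(_ _ (mem_iota_ord c))
        /allP/(_ _ (mem_iota_ord d)) := noK4 a.
Qed.

End GraphsOnOrdinals.

Definition bt_rel k (a b : nat) := bt_half k a b || bt_half k b a.
Definition turan_rel r (a b : nat) := a %% r != b %% r.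

Lemma bt_rel_sym k a b : bt_rel k a b = bt_rel k b a.
Proof. by rewrite /bt_rel orbC. Qed.

Lemma turan_rel_sym r a b : turan_rel r a b = turan_rel r b a.
Proof. by rewrite /turan_rel eq_sym. Qed.

Lemma BT_small_facts k : (k == 2) || (k == 3) ->
  [/\ in_G (BT k) (2 * k + 1) 3,
      kt (BT k) 3 = (k + 1) * (k ^ 2 + 1)
    & kt (turan (3 * k + 1) 3) 3 = (k + 1) * k ^ 2].
Proof.
have BTE k' : forall i j, BT k' i j = bt_rel k' i j by [].
have turanE n : forall i j, turan n 3 i j = turan_rel 3 i j by [].
by case/orP => /eqP ->; (split;
  [ apply: (in_G_ord (BTE _) (@bt_rel_sym _))
  | rewrite (kt3_ord (BTE _) (@bt_rel_sym _))
  | rewrite (kt3_ord (turanE _) (@turan_rel_sym _)) ]);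
  rewrite ?unlock; vm_compute.
Qed.

Local Open Scope ring_scope.

Lemma rho_ord n (e : rel 'I_n) t : rho e t = (kt e t)%:R / n%:R.
Proof. by rewrite /rho card_ord. Qed.

Lemma turan_BT_density_lt k : (0 < k <= 3)%N ->
  ((k + 1) * k ^ 2)%:R / (3 * k + 1)%:R
    < ((k + 1) * (k ^ 2 + 1))%:R / (3 * k + 2)%:R :> rat.
Proof.
move=> k_small; rewrite ltr_pdivrMr ?ltr0n ?addn1 // mulrAC.
rewrite ltr_pdivlMr ?ltr0n ?addn2 // -!natrM ltr_nat.
by case/andP: k_small; case: k => [|[|[|[|k]]]].
Qed.

Theorem mainTheorem16 (k : nat) (hk : (k == 2)%N || (k == 3)%N) :
  [/\ in_G (BT k) (2 * k + 1) 3,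
      rho (BT k) 3 = ((k + 1) * (k ^ 2 + 1))%:R / (3 * k + 2)%:R,
      rho (turan (3 * k + 1) 3) 3 < rho (BT k) 3
    & exists (T : finType) (e : rel T),
        [/\ (0 < #|T|)%N, in_G e (2 * k + 1) 3 &
            rho (turan (3 * k + 1) 3) 3 < rho e 3]].
Proof.
have [BT_in_G kt_BT kt_turan] := BT_small_facts hk.
have rho_BT : rho (BT k) 3 = ((k + 1) * (k ^ 2 + 1))%:R / (3 * k + 2)%:R.
  by rewrite rho_ord kt_BT.
have gap : rho (turan (3 * k + 1) 3) 3 < rho (BT k) 3.
  rewrite rho_BT rho_ord kt_turan.
  by apply: turan_BT_density_lt; case/orP: hk => /eqP ->.
split=> //.
by exists 'I_(3 * k + 2), (BT k); split=> //; rewrite card_ord addn2.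
Qed.
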